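(* Let $N\ge 1$ and let $\mathcal H_1,\dots,\mathcal H_N$ be finite-dimensional complex Hilbert spaces. Let $B$ be a finite set with $|B|=\prod_{j=1}^N \dim \mathcal H_j$ and let $(\psi_b)_{b\in B}$ be an orthonormal basis of $\bigotimes_{j=1}^N \mathcal H_j$. (i) If there exists an LOCC protocol (in the sense of the context; its local instruments and global classical operations are allowed to be unnormalised) which perfectly distinguishes the family $(\psi_b)_{b\in B}$, then no $\psi_b$ is entangled, i.e. every $\psi_b$ is a product state $\psi_b=\psi_{b,1}\otimes\cdots\otimes\psi_{b,N}$ with $\psi_{b,i}\in\mathcal H_i$. (ii) Conversely, if every $\psi_b$ is a product state, then there exists a unital LOCC protocol (possibly involving unnormalised local instruments/global classical operations) which perfectly distinguishes the family $(\psi_b)_{b\in B}$.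
   Context: Processes: quantum systems are finite-dimensional Hilbert spaces (acting on density operators), classical systems are finite sets $X$ (states are vectors in $(\mathbb R^{+})^X$). A process is a completely positive (CP) map between tensor products of quantum and classical systems, classical parts being treated as diagonal/commutative; a purely classical process $X\to Y$ is a $Y\times X$ matrix with non-negative real entries. A process is normalised if it is trace-preserving (on classical systems: its matrix is column-stochastic); ''unnormalised'' means no such requirement is imposed. A process is unital if it maps the identity operator on each quantum input (and the all-ones vector on each classical input) to the identity operator on each quantum output (resp. the all-ones vector on each classical output). Local instrument for party $i$: a CP process with one classical input and one quantum input of party $i$, and one classical output and one quantum output of party $i$ (the quantum systems of party $i$ being finite-dimensional Hilbert spaces, the first quantum input being $\mathcal H_i$). LOCC protocol with $R\ge1$ rounds: in each round $r$, first a global classical operation (a non-negative matrix) is applied, taking the classical outputs of all parties' local instruments from round $r-1$ to classical inputs of all parties for round $r$ (for $r=1$ this is a global classical state, with no inputs), and then each party $i$ applies a local instrument $M_i^{(r)}$ to its classical input and its current quantum system; the non-classical systems are untouched by the global classical operations. After round $R$, a global classical post-processing (non-negative matrix) maps the classical outputs of the parties' last instruments to a classical output in $B$, and the remaining quantum systems are discarded (traced out). Such a protocol perfectly distinguishes $(\psi_b)_{b\in B}$ if, for every $b\in B$, applying it to the input state $|\psi_b\rangle\langle\psi_b|$ on $\bigotimes_j\mathcal H_j$ yields exactly the point distribution $\delta_b$ on $B$. The protocol is called unital if the overall process it implements is unital. *)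

(* Finite-dimensional quantum systems are modelled by a finite
   basis index type I (the Hilbert space is I -> C); classical systems are
   finite types X.  Scalars live in an arbitrary numClosedFieldType C
   (e.g. the complex numbers); "0 <= x" in C means x is a nonnegative real. *)
From HB Require Import structures.
From mathcomp Require Import all_boot all_order all_algebra.
Set Implicit Arguments. Unset Strict Implicit. Unset Printing Implicit Defensive.
Import Order.TTheory GRing.Theory Num.Theory.
Local Open Scope ring_scope.

Section QDefs.
Variable C : numClosedFieldType.

Definition vec (I : finType) := I -> C.
Definition op (I : finType) := I -> I -> C.

(* linear maps op I -> op J, given by their coefficients:
   (apply F rho) j j' = sum_{i,i'} F j j' i i' * rho i i' *)
Definition superop (I J : finType) := J -> J -> I -> I -> C.

Definition apply (I J : finType) (F : superop I J) (rho : op I) : op J :=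
  fun j j' => \sum_(i : I) \sum_(i' : I) F j j' i i' * rho i i'.

Definition inner (I : finType) (u v : vec I) : C := \sum_(i : I) (u i)^* * v i.

Definition psd (I : finType) (rho : op I) : Prop :=
  forall v : vec I, 0 <= \sum_(i : I) \sum_(i' : I) (v i)^* * rho i i' * v i'.

(* id_n (x) F acting on operators of 'I_n (x) I *)
Definition ampl (n : nat) (I J : finType) (F : superop I J)
  (rho : op ('I_n * I)%type) : op ('I_n * J)%type :=
  fun aj aj' => \sum_(i : I) \sum_(i' : I) F aj.2 aj'.2 i i' * rho (aj.1, i) (aj'.1, i').

Definition CP (I J : finType) (F : superop I J) : Prop :=
  forall (n : nat) (rho : op ('I_n * I)%type), psd rho -> psd (ampl F rho).

Definition trace (I : finType) (A : op I) : C := \sum_(i : I) A i i.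

Definition proj (I : finType) (v : vec I) : op I := fun i i' => v i * (v i')^*.

Definition idop (I : finType) : op I := fun i i' => (i == i')%:R.

Variable N : nat.

(* tensor product of the systems T i, i < N: basis = dependent tuples *)
Definition jt (T : 'I_N -> finType) : finType := {dffun forall i : 'I_N, T i}.

Definition tens (A Bt : 'I_N -> finType) (F : forall i, superop (A i) (Bt i))
  : superop (jt A) (jt Bt) :=
  fun b b' a a' => \prod_(i < N) F i (b i) (b' i) (a i) (a' i).

Definition is_product (H : 'I_N -> finType) (psi : vec (jt H)) : Prop :=
  exists phi : forall i, vec (H i), forall k : jt H, psi k = \prod_(i < N) phi i (k i).

Variable H : 'I_N -> finType.
Variable B : finType.

(* quantum system of party i before round r (rounds numbered from 0):
   H i before round 0, K i r after round r *)
Definition Qsys (K : 'I_N -> nat -> finType) (i : 'I_N) (r : nat) : finType :=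
  match r with 0 => H i | r'.+1 => K i r' end.

(* An LOCC protocol with nR.+1 rounds (rounds 0..nR), possibly unnormalised.
   In round r: a global classical operation (g0 for r = 0, G r' for r = r'.+1,
   a nonnegative matrix from the product of the parties' classical outputs of
   round r' to the product of their classical inputs of round r), then each
   party i applies its local instrument M i r, which has classical input X i r,
   quantum input Qsys i r, classical output Y i r, quantum output K i r; an
   instrument is a family of CP maps indexed by (classical in, classical out).
   Finally P post-processes the last classical outputs into B. *)
Unset Implicit Arguments.
Record LOCC := {
  nR : nat;
  K : 'I_N -> nat -> finType;
  X : 'I_N -> nat -> finType;
  Y : 'I_N -> nat -> finType;
  M : forall (i : 'I_N) (r : nat), X i r -> Y i r -> superop (Qsys K i r) (K i r);
  g0 : jt (fun i => X i 0) -> C;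
  G : forall r : nat, jt (fun i => X i r.+1) -> jt (fun i => Y i r) -> C;
  P : B -> jt (fun i => Y i nR) -> C;
  M_CP : forall (i : 'I_N) (r : nat) (x : X i r) (y : Y i r), CP (M i r x y);
  g0_ge0 : forall x, 0 <= g0 x;
  G_ge0 : forall r x y, 0 <= G r x y;
  P_ge0 : forall b y, 0 <= P b y
}.

(* unnormalised hybrid state after round r: for each joint classical outcome y
   of round r, an operator on the joint quantum system *)
Fixpoint lstate (p : LOCC) (rho : op (jt H)) (r : nat)
  : jt (fun i => Y p i r) -> op (jt (fun i => K p i r)) :=
  match r as r0 return jt (fun i => Y p i r0) -> op (jt (fun i => K p i r0)) with
  | 0 => fun y j j' =>
      \sum_(x : jt (fun i => X p i 0))
        g0 p x * apply (tens (fun i => M p i 0 (x i) (y i))) rho j j'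
  | r'.+1 => fun y j j' =>
      \sum_(x : jt (fun i => X p i r'.+1)) \sum_(y' : jt (fun i => Y p i r'))
        G p r' x y' *
        apply (tens (fun i => M p i r'.+1 (x i) (y i))) (lstate p rho r' y') j j'
  end.

Set Implicit Arguments.

(* the overall process: input operator on (x)_j H_j, output vector on B
   (remaining quantum systems traced out) *)
Definition LOCC_out (p : LOCC) (rho : op (jt H)) (b : B) : C :=
  \sum_(y : jt (fun i => Y p i (nR p))) P p b y * trace (lstate p rho (nR p) y).

Definition perfectly_distinguishes (p : LOCC) (psi : B -> vec (jt H)) : Prop :=
  forall b b' : B, LOCC_out p (proj (psi b)) b' = (b' == b)%:R.

(* unital: identity on the quantum input goes to the all-ones vector on B *)
Definition unital_LOCC (p : LOCC) : Prop :=
  forall b : B, LOCC_out p (@idop (jt H)) b = 1.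

Definition orthonormal_basis (psi : B -> vec (jt H)) : Prop :=
  (forall b b', inner (psi b) (psi b') = (b == b')%:R) /\
  (forall v : vec (jt H), exists c : B -> C,
      forall k, v k = \sum_(b : B) c b * psi b k).

End QDefs.

From HB Require Import structures.
From mathcomp Require Import all_boot all_order all_algebra.
From mathcomp Require Import ring.
From Stdlib Require Import ClassicalEpsilon.
Set Implicit Arguments. Unset Strict Implicit. Unset Printing Implicit Defensive.
Import Order.TTheory GRing.Theory Num.Theory.
Local Open Scope ring_scope.

(* An outcome probability [rho |-> LOCC_out p rho b] of an LOCC protocol is a nonnegative
   combination of pairings [rho |-> pair (tensop Q) rho] with tensor products of local operators
   [Q i], obtained by pulling the identity back through the parties' instruments; each such
   pairing is positive on positive operators.  If the protocol distinguishes the basis perfectly,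
   one of these terms vanishes on every [psi b'] with [b' != b] but not on [psi b].  A positive
   sesquilinear form that vanishes on all but one vector [psi b] of an orthonormal basis has rank
   one, so some column of [tensop Q] is a nonzero multiple of the conjugate of [psi b]; being a
   column of a tensor product, it is a product vector, hence so is [psi b].
   Conversely, if [psi b] is the product of the [phi b i], every party applies the unnormalised
   rank-one instrument [rho |-> <phi b i| rho |phi b i>] for every outcome [b], and [b] is
   declared when all parties report [b]; the probability of [b] is then [<psi b| rho |psi b>]. *)

(** * Positive operators and completely positive pairings *)

Section Positivity.
Variable C : numClosedFieldType.

Lemma sum_delta (I : finType) (a : I) (F : I -> C) : \sum_x (x == a)%:R * F x = F a.
Proof. by rewrite (bigD1 a) //= eqxx mul1r big1 ?addr0 // => x /negbTE ->; rewrite mul0r. Qed.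

Lemma sum_delta2 (I J : finType) (a : I) (b : J) (F : I -> J -> C) :
  \sum_x \sum_y ((x == a) && (y == b))%:R * F x y = F a b.
Proof.
under eq_bigr => x _ do under eq_bigr => y _ do rewrite -mulnb natrM -mulrA.
by under eq_bigr => x _ do rewrite -big_distrr; rewrite !sum_delta.
Qed.

Lemma exchange_big2 (I I' J J' : finType) (F : I -> I' -> J -> J' -> C) :
  \sum_x \sum_x' \sum_j \sum_j' F x x' j j' = \sum_j \sum_j' \sum_x \sum_x' F x x' j j'.
Proof.
under eq_bigr => x _ do (rewrite exchange_big; under eq_bigr => j _ do rewrite exchange_big).
rewrite exchange_big; by under eq_bigr => j _ do rewrite exchange_big.
Qed.

Lemma sum2_mull (I J : finType) (F : I -> J -> C) c :
  (\sum_i \sum_j F i j) * c = \sum_i \sum_j F i j * c.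
Proof. by rewrite big_distrl; apply: eq_bigr => i _; rewrite big_distrl. Qed.

Lemma sum2_mulr (I J : finType) (F : I -> J -> C) c :
  c * (\sum_i \sum_j F i j) = \sum_i \sum_j c * F i j.
Proof. by rewrite big_distrr; apply: eq_bigr => i _; rewrite big_distrr. Qed.

Lemma sum_pair (I J : finType) (F : I * J -> C) :
  \sum_p F p = \sum_i \sum_j F (i, j).
Proof. by rewrite pair_bigA; apply: eq_bigr => -[]. Qed.

Lemma sum_subsingleton (I : finType) (F : I -> C) (x0 : I) :
  (forall x, x = x0) -> \sum_x F x = F x0.
Proof. by move=> E; rewrite (big_pred1 x0) // => x /=; rewrite [x]E eqxx. Qed.

Lemma eq_psd (I : finType) (R R' : op C I) :
  (forall i i', R i i' = R' i i') -> psd R -> psd R'.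
Proof.
move=> E HR v; have := HR v.
by congr (_ <= _); apply: eq_bigr => i _; apply: eq_bigr => i' _; rewrite E.
Qed.

Lemma psd_comp (I U : finType) (g : U -> I) (rho : op C I) :
  psd rho -> psd (fun u u' => rho (g u) (g u')).
Proof.
move=> Hr v; pose w i := \sum_(u | g u == i) v u.
suff -> : \sum_u \sum_u' (v u)^* * rho (g u) (g u') * v u' =
          \sum_i \sum_i' (w i)^* * rho i i' * w i' by apply: Hr.
rewrite (partition_big g predT) //=; apply: eq_bigr => i _.
under [RHS]eq_bigr do rewrite rmorph_sum /= !mulr_suml.
rewrite [RHS]exchange_big /=; apply: eq_bigr => u /eqP gu.
rewrite (partition_big g predT) //=; apply: eq_bigr => i' _.
by rewrite mulr_sumr; apply: eq_bigr => u' /eqP gu'; rewrite gu gu'.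
Qed.

Lemma psd_sum (I T : finType) (F : T -> op C I) :
  (forall t, psd (F t)) -> psd (fun i i' => \sum_t F t i i').
Proof.
move=> HF v; rewrite (eq_bigr (fun i => \sum_t \sum_i' (v i)^* * F t i i' * v i'));
  last by move=> i _; rewrite exchange_big; apply: eq_bigr => i' _; rewrite mulr_sumr mulr_suml.
by rewrite exchange_big; apply: sumr_ge0 => t _; apply: HF.
Qed.

Lemma psd_diag_ge0 (I : finType) (rho : op C I) a : psd rho -> 0 <= rho a a.
Proof.
move/(_ (fun i => (i == a)%:R)).
rewrite (eq_bigr (fun i => (i == a)%:R * rho i a)) ?sum_delta // => i _.
rewrite (eq_bigr (fun i' => (i' == a)%:R * ((i == a)%:R * rho i i'))) ?sum_delta // => i' _.
by rewrite conjC_nat mulrC mulrA.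
Qed.

Lemma psd_proj (I : finType) (v : vec C I) : psd (proj v).
Proof.
move=> w; rewrite /proj.
have -> : \sum_i \sum_i' (w i)^* * (v i * (v i')^*) * w i' =
          (\sum_i (w i)^* * v i) * (\sum_i (w i)^* * v i)^*.
  rewrite mulr_suml; apply: eq_bigr => i _.
  rewrite rmorph_sum mulr_sumr; apply: eq_bigr => i' _.
  by rewrite rmorphM /= conjCK; ring.
exact: mul_conjC_ge0.
Qed.

Lemma psd_zero (I : finType) (R : op C I) : (forall i i', R i i' = 0) -> psd R.
Proof. by move=> R0 v; rewrite big1 // => i _; rewrite big1 // => i' _; rewrite R0 mulr0 mul0r. Qed.

Definition pair (I : finType) (Q R : op C I) : C := \sum_i \sum_i' Q i i' * R i i'.

Lemma pair_sum (I T : finType) (Q : op C I) (R : T -> op C I) :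
  pair Q (fun j j' => \sum_t R t j j') = \sum_t pair Q (R t).
Proof.
rewrite /pair [RHS]exchange_big; apply: eq_bigr => j _; rewrite [RHS]exchange_big.
by apply: eq_bigr => j' _; rewrite big_distrr.
Qed.

Lemma pair_scale (I : finType) (Q R : op C I) w :
  pair Q (fun j j' => w * R j j') = w * pair Q R.
Proof. by rewrite /pair sum2_mulr; do 2 apply: eq_bigr => ? _; rewrite mulrCA. Qed.

Lemma pair_idop (I : finType) (R : op C I) : pair (@idop C I) R = trace R.
Proof.
apply: eq_bigr => i _; rewrite -[RHS](sum_delta i (R i)).
by apply: eq_bigr => i' _; rewrite /idop eq_sym.
Qed.

Definition rank1 (I : finType) (v : vec C I) : op C I := fun a a' => (v a)^* * v a'.

Lemma pair_rank1_idop (I : finType) (u : vec C I) : pair (rank1 u) (@idop C I) = inner u u.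
Proof.
apply: eq_bigr => a _; rewrite -[RHS](sum_delta a (rank1 u a)).
by apply: eq_bigr => a' _; rewrite /idop eq_sym mulrC.
Qed.

Lemma pair_rank1_proj (I : finType) (u v : vec C I) :
  pair (rank1 u) (proj v) = inner u v * (inner u v)^*.
Proof.
rewrite /inner rmorph_sum mulr_suml; apply: eq_bigr => a _.
rewrite mulr_sumr; apply: eq_bigr => a' _; rewrite /rank1 /proj rmorphM /= conjCK; ring.
Qed.

Definition ppair (A I : finType) (Q : op C I) (rho : op C (A * I)%type) : op C A :=
  fun a a' => \sum_x \sum_x' Q x x' * rho (a, x) (a', x').

(* The functional [rho |-> pair Q rho] is completely positive.  Unlike positivity of [Q], this
   property is visibly stable under [dual] of CP maps and under partial contractions. *)
Definition CP_pairing (I : finType) (Q : op C I) : Prop :=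
  forall (A : finType) (rho : op C (A * I)%type), psd rho -> psd (ppair Q rho).

Lemma CP_pairing_idop (I : finType) : CP_pairing (@idop C I).
Proof.
move=> A rho Hr; have := psd_sum (fun x => psd_comp (fun a : A => (a, x)) Hr).
apply: eq_psd => a a'; apply: eq_bigr => x _.
rewrite -[LHS](sum_delta x (fun x' => rho (a, x) (a', x'))).
by apply: eq_bigr => x' _; rewrite /idop eq_sym.
Qed.

Lemma CP_pairing_rank1 (I : finType) (v : vec C I) : CP_pairing (rank1 v).
Proof.
move=> A rho Hr w; have := Hr (fun q => w q.1 * v q.2).
congr (_ <= _); rewrite sum_pair; apply: eq_bigr => a _.
under eq_bigr => x _ do rewrite sum_pair.
rewrite exchange_big; apply: eq_bigr => a' _.
rewrite /ppair /rank1 sum2_mulr sum2_mull.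
by apply: eq_bigr => x _; apply: eq_bigr => x' _ /=; rewrite rmorphM; ring.
Qed.

Definition amplT (A I J : finType) (F : superop C I J) (rho : op C (A * I)%type)
  : op C (A * J)%type :=
  fun aj aj' => \sum_i \sum_i' F aj.2 aj'.2 i i' * rho (aj.1, i) (aj'.1, i').

Lemma CP_amplT (A I J : finType) (F : superop C I J) (rho : op C (A * I)%type) :
  CP F -> psd rho -> psd (amplT F rho).
Proof.
move=> HF Hr.
have := HF _ _ (psd_comp (fun p : 'I_#|A| * I => (enum_val p.1, p.2)) Hr).
move/(psd_comp (fun p : A * J => (enum_rank p.1, p.2))).
by apply: eq_psd => -[a j] [a' j']; rewrite /ampl /amplT /= !enum_rankK.
Qed.

Definition dual (I J : finType) (F : superop C I J) (Q : op C J) : op C I :=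
  fun x x' => \sum_j \sum_j' Q j j' * F j j' x x'.

Lemma ppair_dual (A I J : finType) (F : superop C I J) (Q : op C J)
    (rho : op C (A * I)%type) (a a' : A) :
  ppair (dual F Q) rho a a' = ppair Q (amplT F rho) a a'.
Proof.
rewrite /ppair /amplT /dual /=.
under eq_bigr => x _ do under eq_bigr => x' _ do rewrite sum2_mull.
under [RHS]eq_bigr => j _ do under eq_bigr => j' _ do rewrite sum2_mulr.
rewrite exchange_big2; do 4 apply: eq_bigr => ? _.
by rewrite mulrA.
Qed.

Lemma CP_pairing_dual (I J : finType) (F : superop C I J) (Q : op C J) :
  CP F -> CP_pairing Q -> CP_pairing (dual F Q).
Proof.
move=> HF HQ A rho Hr; have := HQ A _ (CP_amplT HF Hr).
by apply: eq_psd => a a'; rewrite ppair_dual.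
Qed.

Lemma pair_apply (I J : finType) (F : superop C I J) (Q : op C J) (rho : op C I) :
  pair Q (apply F rho) = pair (dual F Q) rho.
Proof.
rewrite /pair /apply /dual.
under eq_bigr => j _ do under eq_bigr => j' _ do rewrite sum2_mulr.
under [RHS]eq_bigr => i _ do under eq_bigr => i' _ do rewrite sum2_mull.
rewrite exchange_big2; do 4 apply: eq_bigr => ? _.
by rewrite mulrA.
Qed.


Lemma CP_const (I J : finType) (Q : op C I) : CP_pairing Q -> CP (fun _ _ : J => Q).
Proof. by move=> HQ n rho Hr; apply: eq_psd (psd_comp (fun q : 'I_n * J => q.1) (HQ _ _ Hr)). Qed.

Lemma CP_zero (I J : finType) : CP (fun (_ _ : J) (_ _ : I) => 0 : C).
Proof.
move=> n rho _; apply: psd_zero => ? ?.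
by rewrite /ampl big1 // => ? _; rewrite big1 // => ? _; rewrite mul0r.
Qed.

End Positivity.

(** * Operators on a joint system *)

Lemma big_distr_dffun (R : comPzSemiRingType) (I : finType) (T : I -> finType)
    (g : forall i, T i -> R) :
  \sum_(j : {dffun forall i, T i}) \prod_i g i (j i) = \prod_i \sum_(x : T i) g i x.
Proof.
pose P i := [ffun x => g i x].
rewrite (reindex (@dffun_of_fprod _ T)) /=; last exact/onW_bij/dffun_of_fprod_bij.
transitivity (\sum_(t : fprod T) \prod_i P i (t i)).
  by apply: eq_bigr => t _; apply: eq_bigr => i _; rewrite ffunE /dffun_of_fprod ffunE.
rewrite big_fprod.
transitivity (\prod_i \sum_(j in tagged_with T i) untag 0 (P i) j).
  by rewrite bigA_distr_big_dep.
by apply: eq_bigr => i _; rewrite -(big_tag P); apply: eq_bigr => x _; rewrite ffunE.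
Qed.

Lemma dffun_neq (I : finType) (T : I -> finType) (x y : {dffun forall i, T i}) :
  x != y -> exists i, x i != y i.
Proof.
move=> nxy; apply/existsP; apply: contraR nxy; rewrite negb_exists => /forallP Hxy.
by apply/eqP/ffunP => i; apply/eqP; have := Hxy i; rewrite negbK.
Qed.

Section Tuples.
Variables (C : numClosedFieldType) (N : nat) (T : 'I_N -> finType).

Definition upd (a : jt T) (i : 'I_N) (y : T i) : jt T := finfun (dfwith (fun k => a k) y).
Arguments upd : clear implicits.

Lemma upd_in a i y : upd a i y i = y.
Proof. by rewrite /upd ffunE dfwith_in. Qed.

Lemma upd_out a i y j : i != j -> upd a i y j = a j.
Proof. by move=> ne; rewrite /upd ffunE dfwith_out. Qed.

Definition agree (s : seq 'I_N) (x a : jt T) : bool :=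
  [forall j, (j \notin s) ==> (x j == a j)].

Lemma agree_nil x a : agree [::] x a = (x == a).
Proof.
apply/forallP/eqP => [Hx|-> j]; last by rewrite eqxx implybT.
by apply/ffunP => j; apply/eqP; have := Hx j.
Qed.

Lemma agree_upd s x a i y : i \notin s ->
  agree s x (upd a i y) = (x i == y) && agree (i :: s) x a.
Proof.
move=> nis; apply/forallP/andP => [Hx|[/eqP xi /forallP Hx] j].
  split; first by have := Hx i; rewrite nis upd_in.
  apply/forallP => j; rewrite in_cons negb_or; apply/implyP => /andP[ne njs].
  by have := Hx j; rewrite njs upd_out // eq_sym.
apply/implyP => njs; have [<-|ne] := eqVneq i j; first by rewrite upd_in xi.
by rewrite upd_out //; have := Hx j; rewrite in_cons negb_or eq_sym ne njs.
Qed.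

Lemma agree_all x a : agree (index_enum 'I_N) x a.
Proof. by apply/forallP => j; rewrite mem_index_enum. Qed.

Definition contract (Q : forall i, op C (T i)) (i : 'I_N) (R : op C (jt T)) : op C (jt T) :=
  fun a a' => \sum_y \sum_y' Q i y y' * R (upd a i y) (upd a' i y').

Definition contract_seq (Q : forall i, op C (T i)) (s : seq 'I_N) (R : op C (jt T)) :=
  foldr (contract Q) R s.

Lemma psd_contract Q i R : CP_pairing (Q i) -> psd R -> psd (contract Q i R).
Proof.
move=> HQ HR; have := HQ _ _ (psd_comp (fun p : jt T * T i => upd p.1 i p.2) HR).
exact: eq_psd.
Qed.

Lemma psd_contract_seq Q s R : (forall i, CP_pairing (Q i)) -> psd R -> psd (contract_seq Q s R).
Proof. by move=> HQ HR; elim: s => //= i s IH; apply: psd_contract. Qed.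

Lemma contract_seqE Q s R a a' : uniq s ->
  contract_seq Q s R a a' = \sum_x \sum_x' (agree s x a && agree s x' a')%:R *
                              \prod_(i <- s) Q i (x i) (x' i) * R x x'.
Proof.
elim: s a a' => [|i s IH] a a'.
  move=> _ /=; under [RHS]eq_bigr do under eq_bigr do rewrite !agree_nil big_nil mulr1.
  by rewrite sum_delta2.
rewrite cons_uniq => /andP[nis us].
have -> : contract_seq Q (i :: s) R = contract Q i (contract_seq Q s R) by [].
rewrite /contract.
under eq_bigr => y _ do under eq_bigr => y' _ do rewrite IH // (sum2_mulr _ (Q i y y')).
rewrite exchange_big2; apply: eq_bigr => x _; apply: eq_bigr => x' _.
set P := \prod_(k <- s) _.
have E y y' : Q i y y' * ((agree s x (upd a i y) && agree s x' (upd a' i y'))%:R * P * R x x')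
   = ((y == x i) && (y' == x' i))%:R *
     (Q i y y' * ((agree (i :: s) x a && agree (i :: s) x' a')%:R * P * R x x')).
  by rewrite !agree_upd // andbACA -mulnb natrM (eq_sym (x i)) (eq_sym (x' i)); ring.
rewrite (eq_bigr _ (fun y _ => eq_bigr _ (fun y' _ => E y y'))).
by rewrite sum_delta2 big_cons /P; ring.
Qed.

Definition tensop (Q : forall i, op C (T i)) : op C (jt T) :=
  fun j j' => \prod_i Q i (j i) (j' i).

(* Contracting the parties one at a time keeps [R] positive, and the diagonal entries of the full
   contraction are the pairing. *)
Lemma pair_tensop_ge0 Q R :
  (forall i, CP_pairing (Q i)) -> psd R -> 0 <= pair (tensop Q) R.
Proof.
move=> HQ HR; have [a _ | T0] := pickP (@predT (jt T)); last by rewrite /pair big_pred0.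
have := psd_diag_ge0 a (psd_contract_seq (index_enum 'I_N) HQ HR).
rewrite contract_seqE ?index_enum_uniq //.
by congr (_ <= _); do 2 apply: eq_bigr => ? _; rewrite !agree_all mul1r.
Qed.

Lemma tensop_idop j j' : tensop (fun i => @idop C (T i)) j j' = @idop C (jt T) j j'.
Proof.
rewrite /tensop /idop; have [<-|/dffun_neq[i ne]] := eqVneq j j'.
  by apply: big1 => i _; rewrite eqxx.
by rewrite (bigD1 i) //= (negbTE ne) mul0r.
Qed.

Lemma tensop_rank1 (v : forall i, vec C (T i)) (psi : vec C (jt T)) a a' :
  (forall k, psi k = \prod_i v i (k i)) ->
  tensop (fun i => rank1 (v i)) a a' = rank1 psi a a'.
Proof. by move=> Hpsi; rewrite /tensop /rank1 !Hpsi rmorph_prod -big_split. Qed.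

Lemma is_product_scale (psi : vec C (jt T)) (c : C) (v : forall i, vec C (T i)) (i0 : 'I_N) :
  (forall k, psi k = c * \prod_i v i (k i)) -> is_product psi.
Proof.
move=> Hpsi; exists (fun i x => if i == i0 then c * v i x else v i x) => k.
rewrite Hpsi [RHS](bigD1 i0) //= (bigD1 i0) //= eqxx mulrA; congr (_ * _).
by apply: eq_bigr => i /negbTE ->.
Qed.

End Tuples.

Section Tensor.
Variables (C : numClosedFieldType) (N : nat) (Tin Tout : 'I_N -> finType).
Implicit Types (F : forall i, superop C (Tin i) (Tout i)) (Q : forall i, op C (Tout i)).

Lemma dual_tens F Q a a' : dual (tens F) (tensop Q) a a' = tensop (fun i => dual (F i) (Q i)) a a'.
Proof.
rewrite /dual /tensop /tens.
rewrite -(big_distr_dffun (fun i j => \sum_j' Q i j j' * F i j j' (a i) (a' i))).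
apply: eq_bigr => j _.
rewrite -(big_distr_dffun (fun i j' => Q i (j i) j' * F i (j i) j' (a i) (a' i))).
by apply: eq_bigr => j' _; rewrite big_split.
Qed.

Lemma pair_apply_tens F Q rho :
  pair (tensop Q) (apply (tens F) rho) = pair (tensop (fun i => dual (F i) (Q i))) rho.
Proof. by rewrite pair_apply; do 2 apply: eq_bigr => ? _; rewrite dual_tens. Qed.

End Tensor.

(** * Positive sesquilinear forms *)

Section Forms.
Variables (C : numClosedFieldType) (I : finType).
Implicit Types (T : op C I) (u v w : vec C I).

Definition sesq T u w : C := pair T (fun a a' => u a * (w a')^*).

Lemma sesq_expand T u w t :
  sesq T (fun a => u a + t * w a) (fun a => u a + t * w a) =
  sesq T u u + t^* * sesq T u w + t * sesq T w u + t * t^* * sesq T w w.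
Proof.
rewrite /sesq /pair !mulr_sumr -!big_split; apply: eq_bigr => a _.
rewrite !mulr_sumr -!big_split; apply: eq_bigr => a' _ /=.
by rewrite !rmorphD !rmorphM /=; ring.
Qed.

Lemma sesq_conj T u w : (forall v, 0 <= sesq T v v) -> sesq T w u = (sesq T u w)^*.
Proof.
move=> Tpos; set a := sesq T u w; set b := sesq T w u.
have cu := geC0_conj (Tpos u); have cw := geC0_conj (Tpos w).
have E1 : a^* + b^* = a + b.
  have h := geC0_conj (Tpos (fun k => u k + 1 * w k)).
  rewrite sesq_expand rmorph1 !mul1r !rmorphD /= cu cw -/a -/b in h.
  apply: (addrI (sesq T u u)); apply: (addIr (sesq T w w)); rewrite !addrA; exact: h.
have E2 : 'i * a^* + (- 'i) * b^* = - 'i * a + 'i * b.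
  have h := geC0_conj (Tpos (fun k => u k + 'i * w k)).
  rewrite sesq_expand conjCi mulrN -expr2 sqrCi opprK mul1r -/a -/b in h.
  rewrite !rmorphD /= cu cw !rmorphM /= rmorphN /= conjCi opprK in h.
  move: h; rewrite -!addrA => /addrI; rewrite !addrA => /addIr.
  by rewrite mulNr.
have E3 : a^* - b^* = b - a.
  by apply: (mulfI (neq0Ci C)); rewrite mulrBr -mulNr E2; ring.
have : 2%:R * (b - a^*) = 0.
  have -> : 2%:R * (b - a^*) = (a + b - (a^* + b^*)) - (a^* - b^* - (b - a)) by ring.
  by rewrite E1 E3 !subrr.
by move/eqP; rewrite mulf_eq0 pnatr_eq0 /= subr_eq0 => /eqP.
Qed.

Lemma sesq_null T u w :
  (forall v, 0 <= sesq T v v) -> sesq T u u = 0 -> sesq T u w = 0.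
Proof.
move=> Tpos Tu; set a := sesq T u w; set g := sesq T w w.
have g_ge0 : 0 <= g := Tpos w.
(* expand the form at [u - x a w], with [0 < x] small enough that [x g < 2] *)
set x := (g + 1)^-1.
have x_gt0 : 0 < x by rewrite invr_gt0 ltr_wpDl.
have xg_lt2 : x * g - 2%:R < 0.
  rewrite subr_lt0; apply: (@le_lt_trans _ _ 1); last by rewrite ltr1n.
  by rewrite mulrC ler_pdivrMr ?ltr_wpDl // mul1r lerDl.
have := Tpos (fun k => u k + - (x * a) * w k).
rewrite sesq_expand Tu (sesq_conj u w Tpos) -/a -/g !rmorphN !rmorphM /=.
rewrite (geC0_conj (ltW x_gt0)).
have -> : 0 + - (x * a^*) * a + - (x * a) * a^* + - (x * a) * - (x * a^*) * g =
          (a * a^*) * (x * (x * g - 2%:R)) by ring.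
have coef_lt0 : x * (x * g - 2%:R) < 0 by rewrite pmulr_rlt0.
have := mul_conjC_ge0 a; rewrite le_eqVlt => /orP[|aa_gt0].
  by rewrite eq_sym mul_conjC_eq0 => /eqP.
by rewrite pmulr_rge0 // => /(lt_le_trans coef_lt0); rewrite ltxx.
Qed.

Lemma sesq_suml T (J : finType) (c : J -> C) (ps : J -> vec C I) u w :
  (forall k, u k = \sum_b c b * ps b k) -> sesq T u w = \sum_b c b * sesq T (ps b) w.
Proof.
move=> Hu; rewrite /sesq /pair.
under [RHS]eq_bigr => b _ do rewrite sum2_mulr.
rewrite [RHS]exchange_big; apply: eq_bigr => a _; rewrite [RHS]exchange_big.
apply: eq_bigr => a' _; rewrite Hu big_distrl big_distrr.
by apply: eq_bigr => b _ /=; ring.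
Qed.

Definition delta (a : I) : vec C I := fun k => (k == a)%:R.

Lemma sesq_delta T a a' : sesq T (delta a) (delta a') = T a a'.
Proof.
rewrite /sesq /pair -[RHS](sum_delta2 a a' T).
by do 2 apply: eq_bigr => ? _; rewrite conjC_nat -mulnb natrM mulrC.
Qed.

Lemma inner_delta u a : inner u (delta a) = (u a)^*.
Proof.
by rewrite -(sum_delta a (fun k => (u k)^*)); apply: eq_bigr => k _; rewrite mulrC.
Qed.

Lemma inner_sumr (J : finType) u (c : J -> C) (ps : J -> vec C I) :
  inner u (fun k => \sum_b c b * ps b k) = \sum_b c b * inner u (ps b).
Proof.
rewrite /inner; under eq_bigr do rewrite big_distrr.
rewrite exchange_big; apply: eq_bigr => b _; rewrite big_distrr.
by apply: eq_bigr => k _ /=; ring.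
Qed.

Section OrthonormalBasis.
Variables (J : finType) (ps : J -> vec C I).
Hypothesis ps_orth : forall b b', inner (ps b) (ps b') = (b == b')%:R.
Hypothesis ps_span : forall v, exists c : J -> C, forall k, v k = \sum_b c b * ps b k.

Lemma onb_expand v k : v k = \sum_b inner (ps b) v * ps b k.
Proof.
have [c Hc] := ps_span v; rewrite Hc; apply: eq_bigr => b _; congr (_ * _).
have -> : inner (ps b) v = inner (ps b) (fun k => \sum_b' c b' * ps b' k).
  by apply: eq_bigr => k' _; rewrite Hc.
rewrite inner_sumr -(sum_delta b c); apply: eq_bigr => b' _.
by rewrite ps_orth eq_sym mulrC.
Qed.

Lemma sesq_isolated T b0 :
  (forall v, 0 <= sesq T v v) -> (forall b, b != b0 -> sesq T (ps b) (ps b) = 0) ->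
  forall a a', T a a' = (ps b0 a)^* * sesq T (ps b0) (delta a').
Proof.
move=> Tpos Tzero a a'.
rewrite -sesq_delta (sesq_suml _ _ (onb_expand (delta a))) (bigD1 b0) //=.
rewrite big1 ?addr0 ?inner_delta // => b nb.
by rewrite (sesq_null _ Tpos (Tzero b nb)) mulr0.
Qed.

Lemma sesq_isolated_column T b0 :
  (forall v, 0 <= sesq T v v) -> (forall b, b != b0 -> sesq T (ps b) (ps b) = 0) ->
  sesq T (ps b0) (ps b0) != 0 ->
  exists a0 kappa, kappa != 0 /\ forall a, T a a0 = (ps b0 a)^* * kappa.
Proof.
move=> Tpos Tzero; have col := sesq_isolated Tpos Tzero.
have [a0 nz | col0] := pickP (fun a0 => sesq T (ps b0) (delta a0) != 0).
  by exists a0, (sesq T (ps b0) (delta a0)).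
case/negP; apply/eqP; apply: big1 => a _; apply: big1 => a' _.
by rewrite col; move/negbFE/eqP: (col0 a') => ->; rewrite mulr0 !mul0r.
Qed.

End OrthonormalBasis.
End Forms.

(** * Outcome probabilities of LOCC protocols *)

(* [LOCC] is declared under [Unset Implicit Arguments]. *)
Arguments nR {C N H B}.
Arguments K {C N H B}.
Arguments M {C N H B}.
Arguments g0 {C N H B}.
Arguments G {C N H B}.
Arguments P {C N H B}.
Arguments M_CP {C N H B}.
Arguments g0_ge0 {C N H B}.
Arguments G_ge0 {C N H B}.
Arguments P_ge0 {C N H B}.
Arguments lstate {C N H B}.

Section Certificates.
Variables (C : numClosedFieldType) (N : nat) (H : 'I_N -> finType) (B : finType).
Variable psi : B -> vec C (jt H).

Definition isolates (f : op C (jt H) -> C) (b0 : B) : Prop :=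
  (forall b, b != b0 -> f (proj (psi b)) = 0) /\ f (proj (psi b0)) != 0.

Definition certifies_products (f : op C (jt H) -> C) : Prop :=
  (forall v, 0 <= f (proj v)) /\ (forall b0, isolates f b0 -> is_product (psi b0)).

Lemma certifies_ext f g :
  (forall rho, f rho = g rho) -> certifies_products g -> certifies_products f.
Proof.
move=> E [g_ge0 g_cert]; split=> [v|b0 [zero nz]]; first by rewrite E.
by apply: g_cert; split=> [b nb|]; rewrite -E //; apply: zero.
Qed.

Lemma certifies_scale f w :
  0 <= w -> certifies_products f -> certifies_products (fun rho => w * f rho).
Proof.
move=> w_ge0 [f_ge0 f_cert]; split=> [v|b0 [zero nz]]; first exact: mulr_ge0.
have [w_nz f_nz] : w != 0 /\ f (proj (psi b0)) != 0 by apply/andP; rewrite -negb_or -mulf_eq0.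
apply: f_cert; split=> // b nb.
by move/eqP: (zero b nb); rewrite mulf_eq0 (negbTE w_nz) => /eqP.
Qed.

Lemma certifies_sum (T : finType) (F : T -> op C (jt H) -> C) :
  (forall t, certifies_products (F t)) -> certifies_products (fun rho => \sum_t F t rho).
Proof.
move=> HF; split=> [v|b0 [zero nz]]; first by apply: sumr_ge0 => t _; case: (HF t).
have [t Ft_nz | F0] := pickP (fun t => F t (proj (psi b0)) != 0); last first.
  by case/negP: nz; apply/eqP/big1 => t _; apply/eqP/negbFE/F0.
case: (HF t) => _; apply; split=> // b nb.
move/eqP: (zero b nb); rewrite psumr_eq0 => [/allP/(_ t (mem_index_enum t))/eqP //|t' _].
by case: (HF t').
Qed.

Hypothesis N_gt0 : (0 < N)%N.
Hypothesis psi_onb : orthonormal_basis psi.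

Lemma certifies_pair (Q : forall i, op C (H i)) :
  (forall i, CP_pairing (Q i)) -> certifies_products (pair (tensop Q)).
Proof.
move=> HQ; have [ps_orth ps_span] := psi_onb.
have Tpos v : 0 <= sesq (tensop Q) v v := pair_tensop_ge0 HQ (psd_proj v).
split=> // b0 [zero nz].
have [a0 [kappa [kappa_nz col]]] := sesq_isolated_column ps_orth ps_span Tpos zero nz.
apply: (@is_product_scale _ _ _ _ (kappa^*)^-1 (fun i x => (Q i x (a0 i))^*) (Ordinal N_gt0)).
move=> a; rewrite -rmorph_prod -[\prod_i _]/(tensop Q a a0) col rmorphM /= conjCK.
by rewrite [_ * kappa^*]mulrC mulKf ?conjC_eq0.
Qed.

Lemma pair_lstate0 (p : LOCC C N H B) (Q : forall i, op C (K p i 0)) rho y :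
  pair (tensop Q) (lstate p rho 0 y) =
  \sum_x g0 p x * pair (tensop (fun i => dual (M p i 0 (x i) (y i)) (Q i))) rho.
Proof. by rewrite pair_sum; apply: eq_bigr => x _; rewrite pair_scale pair_apply_tens. Qed.

Lemma pair_lstateS (p : LOCC C N H B) r (Q : forall i, op C (K p i r.+1)) rho y :
  pair (tensop Q) (lstate p rho r.+1 y) =
  \sum_x \sum_y' G p r x y' *
    pair (tensop (fun i => dual (M p i r.+1 (x i) (y i)) (Q i))) (lstate p rho r y').
Proof.
rewrite pair_sum; apply: eq_bigr => x _; rewrite pair_sum.
by apply: eq_bigr => y' _; rewrite pair_scale pair_apply_tens.
Qed.

Lemma certifies_lstate (p : LOCC C N H B) r y (Q : forall i, op C (K p i r)) :
  (forall i, CP_pairing (Q i)) ->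
  certifies_products (fun rho => pair (tensop Q) (lstate p rho r y)).
Proof.
elim: r y Q => [|r IH] y Q HQ.
  apply: certifies_ext (pair_lstate0 Q ^~ y) _.
  apply: certifies_sum => x; apply: certifies_scale (g0_ge0 p x) _.
  by apply: certifies_pair => i; apply: CP_pairing_dual (M_CP p i 0 (x i) (y i)) (HQ i).
apply: certifies_ext (pair_lstateS Q ^~ y) _.
apply: certifies_sum => x; apply: certifies_sum => y'.
apply: certifies_scale (G_ge0 p r x y') _.
by apply: IH => i; apply: CP_pairing_dual (M_CP p i r.+1 (x i) (y i)) (HQ i).
Qed.

Lemma certifies_LOCC_out (p : LOCC C N H B) b :
  certifies_products (fun rho => LOCC_out p rho b).
Proof.
pose Id i := @idop C (K p i (nR p)).
apply: (@certifies_ext _ (fun rho =>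
  \sum_y P p b y * pair (tensop Id) (lstate p rho (nR p) y))).
  move=> rho; apply: eq_bigr => y _; rewrite -pair_idop.
  by congr (_ * _); do 2 apply: eq_bigr => ? _; rewrite tensop_idop.
apply: certifies_sum => y; apply: certifies_scale (P_ge0 p b y) _.
by apply: certifies_lstate => i; apply: CP_pairing_idop.
Qed.

Lemma distinguishable_products :
  (exists p : LOCC C N H B, perfectly_distinguishes p psi) -> forall b, is_product (psi b).
Proof.
move=> [p Hp] b; apply: (certifies_LOCC_out p b).2.
split=> [b' nb|]; rewrite Hp; last by rewrite eqxx oner_neq0.
by rewrite eq_sym (negbTE nb).
Qed.

End Certificates.

(** * Measuring a product basis *)

Section ProductMeasurement.
Variables (C : numClosedFieldType) (N : nat) (H : 'I_N -> finType) (B : finType).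
Implicit Type phi : B -> forall i, vec C (H i).

Definition trivial_sys : 'I_N -> nat -> finType := fun _ _ => unit.
Definition outcome_sys : 'I_N -> nat -> finType := fun _ _ => B.

(* Only round 0 is ever executed, as [nR = 0]. *)
Definition meas_instr phi (i : 'I_N) (r : nat) :
    unit -> B -> superop C (Qsys H trivial_sys i r) unit :=
  match r with
  | 0 => fun _ b _ _ => rank1 (phi b i)
  | _.+1 => fun _ _ _ _ _ _ => 0
  end.
Arguments meas_instr : clear implicits.

Lemma meas_instr_CP phi i r x b : CP (meas_instr phi i r x b).
Proof. by case: r => [|r]; [apply/CP_const/CP_pairing_rank1 | apply: CP_zero]. Qed.

Definition meas_protocol phi : LOCC C N H B := {|
  nR := 0; K := trivial_sys; X := trivial_sys; Y := outcome_sys; M := meas_instr phi;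
  g0 := fun _ => 1; G := fun _ _ _ => 0; P := fun b y => [forall i, y i == b]%:R;
  M_CP := meas_instr_CP phi; g0_ge0 := fun _ => ler01; G_ge0 := fun _ _ _ => lexx 0;
  P_ge0 := fun _ _ => ler0n _ _ |}.

Lemma meas_out phi rho b :
  LOCC_out (meas_protocol phi) rho b = pair (tensop (fun i => rank1 (phi b i))) rho.
Proof.
have unit_tuple (x : jt (fun _ : 'I_N => unit)) : x = [ffun => tt].
  by apply/ffunP => i; rewrite ffunE; case: (x i).
have const_b (y : jt (fun _ : 'I_N => B)) : [forall i, y i == b] = (y == [ffun => b]).
  apply/forallP/eqP => [Hy|-> i]; last by rewrite ffunE.
  by apply/ffunP => i; rewrite ffunE; apply/eqP.
rewrite /LOCC_out /=; under eq_bigr do rewrite const_b.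
rewrite sum_delta /trace (sum_subsingleton _ unit_tuple) /=.
rewrite (sum_subsingleton _ unit_tuple) mul1r.
by do 2 apply: eq_bigr => ? _; congr (_ * _); apply: eq_bigr => i _; rewrite ffunE.
Qed.

End ProductMeasurement.

Lemma product_basis_distinguishable (C : numClosedFieldType) (N : nat) (H : 'I_N -> finType)
    (B : finType) (psi : B -> vec C (jt H)) :
  orthonormal_basis psi -> (forall b, is_product (psi b)) ->
  exists p : LOCC C N H B, unital_LOCC p /\ perfectly_distinguishes p psi.
Proof.
move=> [psi_orth _] psi_prod.
pose phi b := proj1_sig (constructive_indefinite_description _ (psi_prod b)).
have phiP b : forall k, psi b k = \prod_i phi b i (k i).
  exact: proj2_sig (constructive_indefinite_description _ (psi_prod b)).
have out rho b : LOCC_out (meas_protocol phi) rho b = pair (rank1 (psi b)) rho.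
  by rewrite meas_out; do 2 apply: eq_bigr => ? _; rewrite (tensop_rank1 _ _ (phiP b)).
exists (meas_protocol phi); split=> [b|b b'].
  by rewrite out pair_rank1_idop psi_orth eqxx.
by rewrite out pair_rank1_proj psi_orth conjC_nat -natrM mulnb andbb.
Qed.

Unset Implicit Arguments.

Theorem theorem1 (C : numClosedFieldType) (N : nat) (H : 'I_N -> finType)
  (B : finType) (psi : B -> vec C (jt H)) :
  (0 < N)%N ->
  #|B| = (\prod_(j < N) #|H j|)%N ->
  orthonormal_basis psi ->
  ((exists p : LOCC C N H B, perfectly_distinguishes p psi) ->
      forall b, is_product (psi b)) /\
  ((forall b, is_product (psi b)) ->
      exists p : LOCC C N H B, unital_LOCC p /\ perfectly_distinguishes p psi).
Proof.
move=> N_gt0 _ psi_onb; split; first exact: distinguishable_products.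
by move=> psi_prod; apply: product_basis_distinguishable.
Qed.
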